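(* Let $H$ be a Kekul\'ean hexagonal system and $n\ge0$. The map $f$ from the set of Clar covers of $H$ with exactly $n$ hexagons to the set of induced subgraphs of $R(H)$ isomorphic to $Q_n$ is injective.
   Context: A hexagonal system is a 2-connected finite plane graph in which every interior face is a regular hexagon of side length one; its hexagons are the boundaries of its interior faces; it is Kekul\'ean if it has a perfect matching. A Clar cover of $H$ is a spanning subgraph each of whose components is a hexagon of $H$ or a single edge. The resonance graph $R(H)$ has the perfect matchings of $H$ as vertices, two adjacent iff their symmetric difference is the edge set of a hexagon of $H$. For a Clar cover $C$, $f(C)$ denotes the subgraph of $R(H)$ induced by all perfect matchings $M$ of $H$ such that every hexagon component of $C$ is $M$-alternating and every single-edge component of $C$ belongs to $M$; for $C$ with $n$ hexagons, $f(C)$ is an induced subgraph of $R(H)$ isomorphic to the $n$-cube $Q_n$. *)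

(* Hexagonal systems are encoded as finite sets of cells of the
   honeycomb lattice, inside an N x N parallelogram box (axial coordinates). *)
From mathcomp Require Import all_boot.
Set Implicit Arguments. Unset Strict Implicit. Unset Printing Implicit Defensive.

Section Hex.
Variable N : nat.

(* Cells (hexagons) of the honeycomb: points (a,b) of the triangular lattice. *)
Definition cell := ('I_N * 'I_N)%type.
(* Vertices of the honeycomb: triangles of the triangular lattice.
   (a,b,true)  = up triangle   {(a,b),(a+1,b),(a,b+1)}
   (a,b,false) = down triangle {(a+1,b),(a,b+1),(a+1,b+1)} *)
Definition vert := ('I_N * 'I_N * bool)%type.
Definition edge := {set vert}.

Definition opred (i : 'I_N) : 'I_N :=
  Ordinal (leq_ltn_trans (leq_pred i) (ltn_ord i)).

(* the six vertices of cell (a,b), in cyclic order around the hexagon *)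
Definition hexverts (c : cell) : seq vert :=
  let a := c.1 in let b := c.2 in
  [:: (a, b, true); (opred a, b, false); (opred a, b, true);
      (opred a, opred b, false); (a, opred b, true); (a, opred b, false)].

Definition hexvset (c : cell) : {set vert} := [set v in hexverts c].

Definition hexedge (c : cell) (i : 'I_6) : edge :=
  [set nth (c.1, c.2, true) (hexverts c) i;
       nth (c.1, c.2, true) (hexverts c) (ordS i)].

Definition hexedges (c : cell) : {set edge} := [set hexedge c i | i : 'I_6].

Definition cadj (c d : cell) : bool :=
  let a := val c.1 in let b := val c.2 in
  let a' := val d.1 in let b' := val d.2 in
  [|| (a' == a.+1) && (b' == b), (a == a'.+1) && (b == b'),
      (a' == a) && (b' == b.+1), (a == a') && (b == b'.+1),
      (a' == a.+1) && (b == b'.+1) | (a == a'.+1) && (b' == b.+1)].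

Definition boundary (c : cell) : bool :=
  [|| val c.1 == 0, val c.2 == 0, val c.1 == N.-1 | val c.2 == N.-1].

Definition interior (c : cell) : bool := ~~ boundary c.

Definition Hverts (S : {set cell}) : {set vert} := \bigcup_(c in S) hexvset c.
Definition Hedges (S : {set cell}) : {set edge} := \bigcup_(c in S) hexedges c.
Definition hadj (S : {set cell}) : rel vert :=
  fun u v => (u != v) && ([set u; v] \in Hedges S).

Definition connected_on (W : {set vert}) (e : rel vert) : bool :=
  [forall u in W, forall v in W,
     connect (fun x y => [&& x \in W, y \in W & e x y]) u v].

Definition two_connected (S : {set cell}) : bool :=
  [&& 2 < #|Hverts S|, connected_on (Hverts S) (hadj S) &
      [forall w in Hverts S, connected_on (Hverts S :\ w) (hadj S)]].

(* Every bounded face of H(S) is a lattice hexagon and the hexagons of H are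
   exactly the cells of S:
   - closedness: an (interior) cell whose six edges all lie in H(S) bounds a
     face of H(S), hence is one of the hexagons of H;
   - no holes: every cell not in S lies in the unbounded face, i.e. is
     connected through cells not in S to the boundary of the box. *)
Definition hex_closed (S : {set cell}) : Prop :=
  forall c : cell, interior c -> hexedges c \subset Hedges S -> c \in S.

Definition no_holes (S : {set cell}) : Prop :=
  forall c : cell, c \notin S ->
    exists2 d : cell, boundary d &
      connect (fun x y => [&& x \notin S, y \notin S & cadj x y]) c d.

Definition hex_system (S : {set cell}) : Prop :=
  [/\ {in S, forall c, interior c}, two_connected S, hex_closed S & no_holes S].

Definition perfect_matching (S : {set cell}) (M : {set edge}) : bool :=
  (M \subset Hedges S) &&
  [forall v in Hverts S, #|[set e in M | v \in e]| == 1].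

Definition kekulean (S : {set cell}) : Prop :=
  exists M : {set edge}, perfect_matching S M.

Definition alternating (M : {set edge}) (c : cell) : bool :=
  [forall i : 'I_6, (hexedge c i \in M) != (hexedge c (ordS i) \in M)].

(* A Clar cover, given by its hexagon components C.1 and its single-edge
   components C.2: vertex-disjoint, covering every vertex of H. *)
Definition clar_cover (S : {set cell}) (C : {set cell} * {set edge}) : bool :=
  [&& C.1 \subset S, C.2 \subset Hedges S &
      [forall v in Hverts S,
         #|[set h in C.1 | v \in hexvset h]| + #|[set e in C.2 | v \in e]| == 1]].

(* vertex set of the induced subgraph f(C) of the resonance graph R(H) *)
Definition fclar (S : {set cell}) (C : {set cell} * {set edge})
  : {set {set edge}} :=
  [set M | [&& perfect_matching S M, [forall h in C.1, alternating M h]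
              & C.2 \subset M]].

End Hex.

(** If [fclar S C = fclar S C'], the matching [clar_matching C] (alternate edges of every
    hexagon of C, plus the single edges of C) and its flip along a hexagon [h]
    of C both lie in [fclar S C'].  At each vertex of [h] these two matchings use the
    two different edges of [h] there, so the component of C' covering that
    vertex cannot be a single edge, and a hexagon of C' through it must contain
    both edges; walking around [h] forces that hexagon to be [h].  Once the
    hexagons agree, an endpoint of a single edge of C is covered in C' by a
    single edge too, and both are the edge of [clar_matching C] at that
    endpoint. *)

From mathcomp Require Import all_boot zify.
Set Implicit Arguments. Unset Strict Implicit. Unset Printing Implicit Defensive.

Lemma iter_ordS_ord0 n (j : 'I_n.+1) : iter j (@ordS n.+1) ord0 = j.
Proof.
apply: val_inj; rewrite -[RHS](modn_small (ltn_ord j)).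
by elim: (nat_of_ord j) => [|k IHk] //=; rewrite IHk -addn1 modnDml addn1.
Qed.

Lemma odd_ordS6 (i : 'I_6) : odd (ordS i) = ~~ odd i.
Proof. by case: i => -[|[|[|[|[|[|]]]]]]. Qed.

Lemma ordSS_neq6 (i : 'I_6) : ordS (ordS i) != i.
Proof. by case: i => -[|[|[|[|[|[|]]]]]]. Qed.

Section Hexagons.
Variable N : nat.
Implicit Types (c d : cell N) (v : vert N) (e : edge N) (i j : 'I_6).

Definition hexvert c i : vert N := nth (c.1, c.2, true) (hexverts c) i.

Lemma hexedgeE c i : hexedge c i = [set hexvert c i; hexvert c (ordS i)].
Proof. by []. Qed.

Lemma hexvsetP c v : reflect (exists j, v = hexvert c j) (v \in hexvset c).
Proof.
rewrite inE; apply: (iffP (nthP (c.1, c.2, true))) => [[i lti <-] | [j ->]].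
  by exists (Ordinal lti).
by exists j.
Qed.

Lemma mem_hexvert c j : hexvert c j \in hexvset c.
Proof. by apply/hexvsetP; exists j. Qed.

Lemma hexvert_edge c j : hexvert c j \in hexedge c j.
Proof. exact: set21. Qed.

Lemma hexvertS_edge c j : hexvert c (ordS j) \in hexedge c j.
Proof. exact: set22. Qed.

Lemma hexvert_pred_edge c j : hexvert c j \in hexedge c (ord_pred j).
Proof. by rewrite -{1}(ord_predK j) hexvertS_edge. Qed.

Lemma hexedge_sub c i v : v \in hexedge c i -> v \in hexvset c.
Proof. by rewrite hexedgeE => /set2P[] ->; apply: mem_hexvert. Qed.

Lemma mem_hexedges c i : hexedge c i \in hexedges c.
Proof. exact: imset_f. Qed.

Lemma hexedges_sub c e v : e \in hexedges c -> v \in e -> v \in hexvset c.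
Proof. by case/imsetP=> i _ ->; apply: hexedge_sub. Qed.

Lemma uniq_hexverts c : interior c -> uniq (hexverts c).
Proof.
case: c => a b; rewrite /interior /boundary /= => intc.
have a_gt0 : 0 < a by rewrite lt0n; apply: contra intc => ->.
have b_gt0 : 0 < b by rewrite lt0n; apply: contra intc => ->; rewrite orbT.
rewrite /= !inE !xpair_eqE -!val_eqE /=.
have -> : (a.-1 == a) = false by lia.
have -> : (nat_of_ord a == a.-1) = false by lia.
have -> : (nat_of_ord b == b.-1) = false by lia.
by rewrite ?eqxx ?andbF ?andbT ?orbF.
Qed.

Lemma hexvert_inj c : interior c -> injective (hexvert c).
Proof. by move=> /uniq_hexverts uc i j /eqP; rewrite nth_uniq // => /eqP/val_inj. Qed.

Lemma hexedge_hexvert c i j : interior c -> hexvert c j \in hexedge c i ->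
  i = j \/ ordS i = j.
Proof.
by move=> intc; rewrite hexedgeE => /set2P[] /(hexvert_inj intc) ->; [left | right].
Qed.

Definition hexedges_at c j : {set edge N} := [set hexedge c j; hexedge c (ord_pred j)].

Lemma hexvert_hexedges_at c j e : e \in hexedges_at c j -> hexvert c j \in e.
Proof. by case/set2P=> ->; [apply: hexvert_edge | apply: hexvert_pred_edge]. Qed.

Lemma hexedges_at_sub c j e : e \in hexedges_at c j -> e \in hexedges c.
Proof. by case/set2P=> ->; apply: mem_hexedges. Qed.

Lemma hexedges_hexvert c e j : interior c -> e \in hexedges c -> hexvert c j \in e ->
  e \in hexedges_at c j.
Proof.
move=> intc /imsetP[i _ ->] /(hexedge_hexvert intc)[-> | <-]; first exact: set21.
by rewrite /hexedges_at ordSK set22.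
Qed.

Lemma hexedge_inj c : interior c -> injective (hexedge c).
Proof.
move=> intc i i' eii'.
have := hexvert_edge c i; rewrite eii' => /(hexedge_hexvert intc)[// | Si].
have := hexvertS_edge c i; rewrite eii' => /(hexedge_hexvert intc)[Si' | /ordS_inj //].
by move: (ordSS_neq6 i'); rewrite Si Si' eqxx.
Qed.

Lemma hexvset_subset_eq c d : interior c -> interior d ->
  {subset hexvset c <= hexvset d} -> c = d.
Proof.
case: c d => a b [a' b']; rewrite /interior /boundary /= => intc intd sub_cd.
have a_gt0 : 0 < a by rewrite lt0n; apply: contra intc => ->.
have b_gt0 : 0 < b by rewrite lt0n; apply: contra intc => ->; rewrite orbT.
have a'_gt0 : 0 < a' by rewrite lt0n; apply: contra intd => ->.
have b'_gt0 : 0 < b' by rewrite lt0n; apply: contra intd => ->; rewrite orbT.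
(* The three up-triangle vertices 0, 2, 4 of c already pin down c. *)
have := sub_cd _ (mem_hexvert (a, b) ord0).
have := sub_cd _ (mem_hexvert (a, b) (@Ordinal 6 2 isT)).
have := sub_cd _ (mem_hexvert (a, b) (@Ordinal 6 4 isT)).
rewrite /hexvert /= !inE !xpair_eqE -!val_eqE /= ?andbT ?andbF ?orbF ?orFb => v4 v2 v0.
clear intc intd sub_cd.
suff [ea eb] : a = a' :> nat /\ b = b' :> nat by rewrite (val_inj ea) (val_inj eb).
by move: v0 v2 v4; lia.
Qed.

Lemma hexvset_eq_of_closed c d : interior c -> interior d ->
  hexvert c ord0 \in hexvset d ->
  (forall j, hexvert c j \in hexvset d -> hexvert c (ordS j) \in hexvset d) ->
  c = d.
Proof.
move=> intc intd c0d closed_d; apply: hexvset_subset_eq => // _ /hexvsetP[j ->].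
by rewrite -(iter_ordS_ord0 j); elim: (nat_of_ord j) => //= k; apply: closed_d.
Qed.

Lemma mem_Hverts (S : {set cell N}) c v : c \in S -> v \in hexvset c -> v \in Hverts S.
Proof. by move=> cS vc; apply/bigcupP; exists c. Qed.

Lemma mem_Hedges (S : {set cell N}) c i : c \in S -> hexedge c i \in Hedges S.
Proof. by move=> cS; apply/bigcupP; exists c; rewrite ?mem_hexedges. Qed.

Lemma Hedges_Hverts (S : {set cell N}) e v : e \in Hedges S -> v \in e -> v \in Hverts S.
Proof. by move=> /bigcupP[c cS ec] /(hexedges_sub ec); apply: mem_Hverts. Qed.

End Hexagons.

Section Matchings.
Variables (N : nat) (S : {set cell N}).
Implicit Types (M E : {set edge N}) (h : cell N) (v : vert N) (e : edge N) (j : 'I_6).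

Definition edges_at M v := [set e in M | v \in e].

Lemma perfect_matching_edges_at M v : perfect_matching S M -> v \in Hverts S ->
  #|edges_at M v| = 1.
Proof. by case/andP=> _ /forallP/(_ v)/implyP pmM /pmM/eqP. Qed.

Lemma perfect_matching_uniq M v e e' : perfect_matching S M -> v \in Hverts S ->
  e \in M -> e' \in M -> v \in e -> v \in e' -> e = e'.
Proof.
move=> pmM vS eM e'M ve ve'.
have : #|edges_at M v| <= 1 by rewrite perfect_matching_edges_at.
by move/card_le1_eqP; apply; rewrite inE ?eM ?e'M ?ve ?ve'.
Qed.

Lemma alternating_pred_neq M h j : alternating M h ->
  (hexedge h j \in M) != (hexedge h (ord_pred j) \in M).
Proof. by move/forallP/(_ (ord_pred j)); rewrite ord_predK eq_sym. Qed.

Lemma alternating_edge_at M h j : alternating M h ->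
  exists2 g, g \in M & g \in hexedges_at h j.
Proof.
move/(alternating_pred_neq j); case jM: (hexedge h j \in M) => predM.
  by exists (hexedge h j); rewrite ?set21.
by exists (hexedge h (ord_pred j)); rewrite ?set22 //; move: predM; case: (_ \in M).
Qed.

Lemma alternating_card_edges_at M h j : interior h -> alternating M h ->
  {subset edges_at M (hexvert h j) <= hexedges h} -> #|edges_at M (hexvert h j)| = 1.
Proof.
move=> inth altM sub_h; have [g gM gj] := alternating_edge_at j altM.
suff -> : edges_at M (hexvert h j) = [set g] by rewrite cards1.
apply/setP => e; rewrite in_set1; apply/idP/eqP => [eA | ->]; last first.
  by rewrite inE gM hexvert_hexedges_at.
have := eA; rewrite inE => /andP[eM ve].
move: (alternating_pred_neq j altM).
case/set2P: (hexedges_hexvert inth (sub_h _ eA) ve) eM => -> eM;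
  by case/set2P: gj gM => -> gM //; rewrite eM gM.
Qed.

Lemma matching_edge_at_hex M h j e : perfect_matching S M -> h \in S -> alternating M h ->
  e \in M -> hexvert h j \in e -> e \in hexedges h.
Proof.
move=> pmM hS altM eM ve; have [g gM gj] := alternating_edge_at j altM.
have vS := mem_Hverts hS (mem_hexvert h j).
rewrite (perfect_matching_uniq pmM vS eM gM ve (hexvert_hexedges_at gj)).
exact: hexedges_at_sub gj.
Qed.

Definition flip M E : {set edge N} := (M :\: E) :|: (E :\: M).

Lemma in_flip M E e : (e \in flip M E) = ((e \in M) != (e \in E)).
Proof. by rewrite !inE; case: (e \in M); case: (e \in E). Qed.

Lemma alternating_flip M h : alternating M h -> alternating (flip M (hexedges h)) h.
Proof.
move/forallP=> altM; apply/forallP => i; rewrite !in_flip !mem_hexedges.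
by move: (altM i); case: (_ \in M); case: (_ \in M).
Qed.

Lemma alternating_flip_disjoint M E h : alternating M h -> [disjoint hexedges h & E] ->
  alternating (flip M E) h.
Proof.
move/forallP=> altM disj; apply/forallP => i.
by rewrite !in_flip !(disjointFr disj (mem_hexedges _ _)) !eqbF_neg !negbK; apply: altM.
Qed.

Lemma perfect_matching_flip M h : h \in S -> interior h -> alternating M h ->
  perfect_matching S M -> perfect_matching S (flip M (hexedges h)).
Proof.
move=> hS inth altM pmM; apply/andP; split.
  apply/subsetP => e; rewrite in_flip.
  case eM: (e \in M); case eh: (e \in hexedges h) => //= _.
    by case/andP: pmM => /subsetP sub_M _; apply: sub_M.
  by case/imsetP: eh => i _ ->; apply: mem_Hedges.
apply/forallP => v; apply/implyP => vS; apply/eqP.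
case: (boolP (v \in hexvset h)) => [/hexvsetP[j ->] | vh].
  apply: alternating_card_edges_at => //; first exact: alternating_flip.
  move=> e; rewrite inE in_flip => /andP[+ ve]; case eM: (e \in M) => /=.
    by rewrite (matching_edge_at_hex pmM hS altM eM ve).
  by case: (e \in hexedges h).
rewrite -(perfect_matching_edges_at pmM vS); apply: eq_card => e.
rewrite !inE; case: (boolP (v \in e)) => ve; rewrite ?andbF ?andbT //.
suff /negbTE -> : e \notin hexedges h by rewrite andbF orbF.
by apply: contra vh => /hexedges_sub; apply.
Qed.

End Matchings.

Section ClarCover.
Variables (N : nat) (S : {set cell N}) (C : {set cell N} * {set edge N}).
Hypotheses (intS : {in S, forall c, interior c}) (ccC : clar_cover S C).
Implicit Types (M : {set edge N}) (h : cell N) (v : vert N) (e : edge N).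

Lemma clar_hexS : C.1 \subset S.
Proof. by case/and3P: ccC. Qed.

Lemma clar_edgeS : C.2 \subset Hedges S.
Proof. by case/and3P: ccC. Qed.

Lemma clar_hex_vert h v : h \in C.1 -> v \in hexvset h -> v \in Hverts S.
Proof. by move/(subsetP clar_hexS); apply: mem_Hverts. Qed.

Lemma clar_cover_card v : v \in Hverts S ->
  #|[set h in C.1 | v \in hexvset h]| + #|[set e in C.2 | v \in e]| = 1.
Proof. by case/and3P: ccC => _ _ /forallP/(_ v)/implyP ccv /ccv/eqP. Qed.

Lemma clar_hex_uniq v h h' : h \in C.1 -> h' \in C.1 ->
  v \in hexvset h -> v \in hexvset h' -> h = h'.
Proof.
move=> hC h'C vh vh'.
have : #|[set h in C.1 | v \in hexvset h]| <= 1.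
  by rewrite -(clar_cover_card (clar_hex_vert hC vh)) leq_addr.
by move/card_le1_eqP; apply; rewrite inE ?hC ?h'C ?vh ?vh'.
Qed.

Lemma clar_edge_uniq v e e' : e \in C.2 -> e' \in C.2 -> v \in e -> v \in e' -> e = e'.
Proof.
move=> eC e'C ve ve'.
have vS : v \in Hverts S := Hedges_Hverts (subsetP clar_edgeS _ eC) ve.
have : #|[set e in C.2 | v \in e]| <= 1 by rewrite -(clar_cover_card vS) leq_addl.
by move/card_le1_eqP; apply; rewrite inE ?eC ?e'C ?ve ?ve'.
Qed.

Lemma clar_hex_edge_disjoint v h e : h \in C.1 -> v \in hexvset h ->
  e \in C.2 -> v \in e -> False.
Proof.
move=> hC vh eC ve.
have hv : 0 < #|[set h in C.1 | v \in hexvset h]|.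
  by apply/card_gt0P; exists h; rewrite inE hC.
have ev : 0 < #|[set e in C.2 | v \in e]| by apply/card_gt0P; exists e; rewrite inE eC.
by have := leq_add hv ev; rewrite clar_cover_card // (clar_hex_vert hC vh).
Qed.

Lemma clar_cover_covers v : v \in Hverts S ->
  (exists2 h, h \in C.1 & v \in hexvset h) \/ (exists2 e, e \in C.2 & v \in e).
Proof.
move=> vS; have := clar_cover_card vS.
have [-> | [h]] := set_0Vmem [set h in C.1 | v \in hexvset h].
  rewrite cards0 add0n => /eqP/cards1P[e eq_e].
  have : e \in [set e in C.2 | v \in e] by rewrite eq_e set11.
  by rewrite inE => /andP[eC ve]; right; exists e.
by rewrite inE => /andP[hC vh] _; left; exists h.
Qed.

Lemma clar_hexedges_disjoint h h' : h \in C.1 -> h' \in C.1 -> h != h' ->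
  [disjoint hexedges h' & hexedges h].
Proof.
move=> hC h'C /eqP neq; rewrite disjoint_subset; apply/subsetP => _ /imsetP[i _ ->].
rewrite inE; apply/negP => hh'.
apply: neq; apply: (clar_hex_uniq hC h'C (hexedges_sub hh' (hexvert_edge h' i))).
exact: mem_hexvert.
Qed.

Lemma fclarP M : reflect
  [/\ perfect_matching S M, {in C.1, forall h, alternating M h} & C.2 \subset M]
  (M \in fclar S C).
Proof.
rewrite inE; apply: (iffP and3P) => [[pmM /forallP altM C2M] | [pmM altM C2M]].
  by split=> // h hC; move: (altM h); rewrite hC.
by split=> //; apply/forallP => h; apply/implyP; apply: altM.
Qed.

Lemma flip_fclar M h : M \in fclar S C -> h \in C.1 -> flip M (hexedges h) \in fclar S C.
Proof.
case/fclarP=> pmM altM C2M hC; apply/fclarP; split.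
- have hS := subsetP clar_hexS _ hC.
  exact: perfect_matching_flip hS (intS hS) (altM _ hC) pmM.
- move=> h' h'C; case: (eqVneq h h') => [<- | neq]; first exact/alternating_flip/altM.
  exact: alternating_flip_disjoint (altM _ h'C) (clar_hexedges_disjoint hC h'C neq).
apply/subsetP => e eC.
have eh : e \notin hexedges h.
  apply/negP => /imsetP[i _ ei].
  by apply: (clar_hex_edge_disjoint hC (mem_hexvert h i) eC); rewrite ei hexvert_edge.
by rewrite in_flip (subsetP C2M _ eC) (negbTE eh).
Qed.

Definition clar_matching : {set edge N} :=
  C.2 :|: \bigcup_(h in C.1) [set hexedge h i | i : 'I_6 & ~~ odd i].

Lemma clar_matchingP e : reflect
  (e \in C.2 \/ exists2 h, h \in C.1 & exists2 i : 'I_6, ~~ odd i & e = hexedge h i)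
  (e \in clar_matching).
Proof.
rewrite inE; apply: (iffP orP) => -[eC | ]; [by left | | by left |].
  case/bigcupP => h hC /imsetP[i]; rewrite inE => oi ->.
  by right; exists h => //; exists i.
case=> h hC [i oi ->]; right; apply/bigcupP; exists h => //.
by apply/imsetP; exists i; rewrite ?inE.
Qed.

Lemma clar_matching_hexedge h i : h \in C.1 -> (hexedge h i \in clar_matching) = ~~ odd i.
Proof.
move=> hC; have inth := intS (subsetP clar_hexS _ hC).
apply/clar_matchingP/idP => [[eC | [h' h'C [i' oi' ei]]] | oi].
- by case: (clar_hex_edge_disjoint hC (mem_hexvert h i) eC (hexvert_edge h i)).
- have eh : h' = h.
    apply: (clar_hex_uniq h'C hC _ (mem_hexvert h i)).
    by apply: (@hexedge_sub _ _ i'); rewrite -ei hexvert_edge.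
  by rewrite eh in ei; rewrite (hexedge_inj inth ei).
- by right; exists h => //; exists i.
Qed.

Lemma alternating_clar_matching h : h \in C.1 -> alternating clar_matching h.
Proof.
by move=> hC; apply/forallP => i; rewrite !clar_matching_hexedge // odd_ordS6; case: (odd i).
Qed.

Lemma perfect_clar_matching : perfect_matching S clar_matching.
Proof.
apply/andP; split.
  apply/subsetP => e /clar_matchingP[eC | [h hC [i _ ->]]].
    exact: (subsetP clar_edgeS).
  exact/mem_Hedges/(subsetP clar_hexS).
apply/forallP => v; apply/implyP => vS.
case: (clar_cover_covers vS) => [[h hC /hexvsetP[j ->]] | [e0 e0C ve0]].
  have inth := intS (subsetP clar_hexS _ hC).
  apply/eqP/(alternating_card_edges_at inth (alternating_clar_matching hC)) => e.
  rewrite inE => /andP[/clar_matchingP[eC | [h' h'C [i _ ei]]] ve].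
    by case: (clar_hex_edge_disjoint hC (mem_hexvert h j) eC ve).
  have eh : h' = h.
    apply: (clar_hex_uniq h'C hC _ (mem_hexvert h j)).
    by rewrite ei in ve; apply: hexedge_sub ve.
  by rewrite ei eh mem_hexedges.
apply/cards1P; exists e0; apply/setP => e; rewrite in_set1 in_set.
apply/andP/eqP => [[eM ve] | ->]; last by split=> //; apply/clar_matchingP; left.
case/clar_matchingP: eM => [eC | [h hC [i _ ei]]].
  exact: clar_edge_uniq eC e0C ve ve0.
by case: (clar_hex_edge_disjoint hC (hexedge_sub (i := i) _) e0C ve0); rewrite -ei.
Qed.

Lemma clar_matching_fclar : clar_matching \in fclar S C.
Proof.
apply/fclarP; split; [exact: perfect_clar_matching | exact: alternating_clar_matching |].
by apply/subsetP => e eC; apply/clar_matchingP; left.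
Qed.

End ClarCover.

Section Injectivity.
Variables (N : nat) (S : {set cell N}) (C C' : {set cell N} * {set edge N}).
Hypotheses (intS : {in S, forall c, interior c})
  (ccC : clar_cover S C) (ccC' : clar_cover S C') (fCC' : fclar S C = fclar S C').

Lemma fclar_hex_subset : C.1 \subset C'.1.
Proof.
apply/subsetP => h hC; have hS := subsetP (clar_hexS ccC) _ hC.
set M := clar_matching C; set M' := flip M (hexedges h).
have MC : M \in fclar S C := clar_matching_fclar intS ccC.
have M'C : M' \in fclar S C := flip_fclar intS ccC MC hC.
have /fclarP[pmM altM _] := MC; have /fclarP[pmM' altM' _] := M'C.
rewrite fCC' in MC M'C.
have /fclarP[_ altM_C' C'2M] := MC; have /fclarP[_ altM'_C' C'2M'] := M'C.
have flip_drops e : e \in M -> e \in hexedges h -> e \notin M'.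
  by move=> eM eh; rewrite in_flip eM eh.
have hexedge_in_C'hex j h' : h' \in C'.1 -> hexvert h j \in hexvset h' ->
    hexedge h j \in hexedges h'.
  move=> h'C' /hexvsetP[j' vj']; have h'S := subsetP (clar_hexS ccC') _ h'C'.
  have [g gM gj] := alternating_edge_at j (altM _ hC).
  have [g' g'M' g'j] := alternating_edge_at j (altM' _ hC).
  have gh' : g \in hexedges h'.
    apply: (matching_edge_at_hex (j := j') pmM h'S (altM_C' _ h'C') gM).
    by rewrite -vj' hexvert_hexedges_at.
  have g'h' : g' \in hexedges h'.
    apply: (matching_edge_at_hex (j := j') pmM' h'S (altM'_C' _ h'C') g'M').
    by rewrite -vj' hexvert_hexedges_at.
  have neq : g != g' by apply: contraNneq (flip_drops _ gM (hexedges_at_sub gj)) => ->.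
  by case/set2P: gj gh' neq => -> ?; case/set2P: g'j g'h' => -> ? //; rewrite eqxx.
have [h0 h0C' v0] : exists2 h0, h0 \in C'.1 & hexvert h ord0 \in hexvset h0.
  have vS := mem_Hverts hS (mem_hexvert h ord0).
  case: (clar_cover_covers ccC' vS) => // -[e eC' ve].
  have eh := matching_edge_at_hex pmM hS (altM _ hC) (subsetP C'2M _ eC') ve.
  by move: (flip_drops _ (subsetP C'2M _ eC') eh); rewrite (subsetP C'2M' _ eC').
suff -> : h = h0 by [].
apply: hexvset_eq_of_closed v0 _ => [||j vj]; first exact: intS.
  exact/intS/(subsetP (clar_hexS ccC')).
exact: hexedges_sub (hexedge_in_C'hex j h0 h0C' vj) (hexvertS_edge h j).
Qed.

Lemma fclar_edge_subset : C.1 = C'.1 -> C.2 \subset C'.2.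
Proof.
move=> eq1; apply/subsetP => e eC.
have /bigcupP[c cS /imsetP[i _ ei]] := subsetP (clar_edgeS ccC) _ eC.
have ve : hexvert c i \in e by rewrite ei hexvert_edge.
have vS := mem_Hverts cS (mem_hexvert c i).
have MC := clar_matching_fclar intS ccC; have /fclarP[pmM _ C2M] := MC.
rewrite fCC' in MC; have /fclarP[_ _ C'2M] := MC.
case: (clar_cover_covers ccC' vS) => [[h hC' vh] | [e' e'C' ve']].
  by rewrite -eq1 in hC'; case: (clar_hex_edge_disjoint ccC hC' vh eC ve).
by rewrite (perfect_matching_uniq pmM vS (subsetP C2M _ eC) (subsetP C'2M _ e'C') ve ve').
Qed.

End Injectivity.

Theorem lemma2 (N n : nat) (S : {set cell N}) :
  hex_system S -> kekulean S ->
  forall C C' : {set cell N} * {set edge N},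
    clar_cover S C -> clar_cover S C' ->
    #|C.1| = n -> #|C'.1| = n ->
    fclar S C = fclar S C' -> C = C'.
Proof.
move=> [intS _ _ _] _ [A B] [A' B'] ccC ccC' _ _ fCC'.
have eqA : A = A'.
  by apply/eqP; rewrite eqEsubset (fclar_hex_subset intS ccC ccC' fCC')
                                  (fclar_hex_subset intS ccC' ccC (esym fCC')).
have eqB : B = B'.
  by apply/eqP; rewrite eqEsubset (fclar_edge_subset intS ccC ccC' fCC' eqA)
                                  (fclar_edge_subset intS ccC' ccC (esym fCC') (esym eqA)).
by rewrite eqA eqB.
Qed.
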